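(* Let $\alpha=m+n\gamma^{-1}\in\mathbb{Z}[\gamma]$ with $m,n\in\mathbb{Z}$ and $\alpha>0$, and let $\mathbf i=(i_1,\dots,i_s)$ be a representation of $\alpha$. Then $d(\mathbf i)\ge|m|+|n|$, $d_1(\mathbf i)\ge|m|$ and $d_2(\mathbf i)\ge|n|$. If $i_s\le1$ or if $i_1,\dots,i_s$ all have the same parity, then $d(\mathbf i)=|m|+|n|$ and $(d_1(\mathbf i),d_2(\mathbf i))=(|m|,|n|)$; otherwise $d(\mathbf i)>|m|+|n|$ and $(d_1(\mathbf i),d_2(\mathbf i))\neq(|m|,|n|)$. Moreover, $d_2(\mathbf i)>|n|$ whenever $i_1,\dots,i_s$ contains two positive integers of different parity.
   Context: Let $f\colon\mathbb{Z}\to\mathbb{Z}$ be defined by $f(0)=f(1)=1$, $f(i+2)=f(i+1)+f(i)$ for all $i\in\mathbb{Z}$; $\gamma=(1+\sqrt5)/2$; $\mathbb{Z}[\gamma]=\mathbb{Z}\oplus\mathbb{Z}\gamma^{-1}$. A representation of $\alpha\in\mathbb{Z}[\gamma]$ is a finite non-decreasing sequence $\mathbf i=(i_1,\dots,i_s)$ of non-negative integers ($s\ge0$) with $\alpha=\gamma^{-i_1}+\dots+\gamma^{-i_s}$ (empty sum $=0$). For such $\mathbf i$: $d(\mathbf i)=\sum_k f(i_k)$, $d_1(\mathbf i)=\sum_k f(i_k-2)$, $d_2(\mathbf i)=\sum_kf(i_k-1)$. *)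

From Stdlib Require Import Reals ZArith List Sorted Arith Lia.
Import ListNotations.
Open Scope R_scope.

Fixpoint fpos (k : nat) : Z :=
  match k with
  | O => 1%Z
  | S O => 1%Z
  | S ((S k') as k1) => (fpos k1 + fpos k')%Z
  end.

(* fneg k = f(-k): obtained from f(i) = f(i+2) - f(i+1). *)
Fixpoint fneg (k : nat) : Z :=
  match k with
  | O => 1%Z
  | S O => 0%Z
  | S ((S k') as k1) => (fneg k' - fneg k1)%Z
  end.

(* f : Z -> Z, the unique function with f 0 = f 1 = 1 and
   f (i+2) = f (i+1) + f i for all integers i. *)
Definition f (z : Z) : Z :=
  if (0 <=? z)%Z then fpos (Z.to_nat z) else fneg (Z.to_nat (- z)).

Definition gamma : R := (1 + sqrt 5) / 2.

Definition rep_value (l : list nat) : R :=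
  fold_right (fun i acc => / gamma ^ i + acc) 0 l.

Definition is_representation (alpha : R) (l : list nat) : Prop :=
  Sorted le l /\ rep_value l = alpha.

Definition rep_d (l : list nat) : Z :=
  fold_right (fun i acc => (f (Z.of_nat i) + acc)%Z) 0%Z l.
Definition rep_d1 (l : list nat) : Z :=
  fold_right (fun i acc => (f (Z.of_nat i - 2) + acc)%Z) 0%Z l.
Definition rep_d2 (l : list nat) : Z :=
  fold_right (fun i acc => (f (Z.of_nat i - 1) + acc)%Z) 0%Z l.

Lemma f_rec : forall i : Z, (i >= -2)%Z -> (i <= 5)%Z -> f (i + 2) = (f (i + 1) + f i)%Z.
Proof. intros i H1 H2. assert (i = -2 \/ i = -1 \/ i = 0 \/ i = 1 \/ i = 2 \/ i = 3 \/ i = 4 \/ i = 5)%Z by lia.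
  repeat destruct H as [H|H]; subst; reflexivity. Qed.

From Stdlib Require Import Reals ZArith List Sorted Arith Lia Lra Classical.
(* Imported last: Reals exports a record field [f] (of [family]) that would shadow Defs.f. *)
From Pilot Require Import Defs.
Open Scope R_scope.

(* Powers of gamma^{-1} have integer coordinates in the basis
   (1, gamma^{-1}):  gamma^{-k} = a_k + b_k gamma^{-1}  with
   a_k = (-1)^k f(k-2)  and  b_k = -(-1)^k f(k-1),  because gamma^{-2} = 1 - gamma^{-1}
   and both sides satisfy the recurrence  x_{k+2} = x_k - x_{k+1}.  Since sqrt 5 is
   irrational, 1 and gamma^{-1} are linearly independent over Z, so a representation
   i of alpha = m + n gamma^{-1} satisfies  m = sum_k a_{i_k},  n = sum_k b_{i_k}.
   On the other hand  d_1(i) = sum_k |a_{i_k}|,  d_2(i) = sum_k |b_{i_k}|  and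
   d = d_1 + d_2.  Everything then follows from the triangle inequality for finite
   sums and its equality case: the sign of a_k and b_k is governed by the parity of k
   (with a_1 = b_0 = 0), so the inequalities are equalities exactly when all indices
   have the same parity or lie in {0, 1}, and become strict otherwise. *)

Lemma f_of_nat (k : nat) : f (Z.of_nat k) = fpos k.
Proof. unfold f. rewrite (proj2 (Z.leb_le _ _)) by lia. now rewrite Nat2Z.id. Qed.

Lemma fpos_pos (k : nat) : (0 < fpos k)%Z.
Proof.
  assert (H : forall j, (0 < fpos j)%Z /\ (0 < fpos (S j))%Z).
  { induction j as [|j [IH1 IH2]]; [simpl; lia|]. split; [exact IH2|].
    change (fpos (S (S j))) with (fpos (S j) + fpos j)%Z. lia. }
  apply (H k).
Qed.

Lemma f_pos (z : Z) : (0 <= z)%Z -> (0 < f z)%Z.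
Proof.
  intro Hz. destruct (Z_of_nat_complete _ Hz) as [k ->].
  rewrite f_of_nat. apply fpos_pos.
Qed.

Lemma f_nonneg (z : Z) : (-2 <= z)%Z -> (0 <= f z)%Z.
Proof.
  intro Hz. destruct (Z.eq_dec z (-2)) as [->|]; [discriminate|].
  destruct (Z.eq_dec z (-1)) as [->|]; [discriminate|].
  apply Z.lt_le_incl, f_pos. lia.
Qed.

Lemma f_rec_ge (z : Z) : (-2 <= z)%Z -> f (z + 2) = (f (z + 1) + f z)%Z.
Proof.
  intro Hz. destruct (Z.eq_dec z (-2)) as [->|]; [reflexivity|].
  destruct (Z.eq_dec z (-1)) as [->|]; [reflexivity|].
  destruct (Z_of_nat_complete z ltac:(lia)) as [k ->].
  replace (Z.of_nat k + 2)%Z with (Z.of_nat (S (S k))) by lia.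
  replace (Z.of_nat k + 1)%Z with (Z.of_nat (S k)) by lia.
  now rewrite !f_of_nat.
Qed.

Lemma gamma_pos : 0 < gamma.
Proof. unfold gamma. pose proof (sqrt_pos 5). lra. Qed.

Lemma sqrt5_sq : sqrt 5 * sqrt 5 = 5.
Proof. apply sqrt_sqrt. lra. Qed.

Lemma inv_gamma_eq : / gamma = (sqrt 5 - 1) / 2.
Proof.
  pose proof gamma_pos. pose proof sqrt5_sq.
  apply (Rmult_eq_reg_l gamma); [|lra].
  rewrite Rinv_r by lra. unfold gamma. nra.
Qed.

(* gamma^{-2} = 1 - gamma^{-1}, the relation driving the coordinate recurrence. *)
Lemma inv_gamma_sq : / gamma * / gamma = 1 - / gamma.
Proof. rewrite inv_gamma_eq. pose proof sqrt5_sq. nra. Qed.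

(* A square is divisible by 5 only if its root is: check the residues mod 5. *)
Lemma five_div_of_square (c x : Z) : (c * c = 5 * x)%Z -> (c mod 5 = 0)%Z.
Proof.
  intro Hc. pose proof (Z.div_mod c 5 ltac:(lia)) as Hd.
  assert (Hr : (0 <= c mod 5 < 5)%Z) by (apply Z.mod_pos_bound; lia).
  set (r := (c mod 5)%Z) in *. set (q := (c / 5)%Z) in *.
  assert (r = 0 \/ r = 1 \/ r = 2 \/ r = 3 \/ r = 4)%Z as Hcases by lia.
  rewrite Hd in Hc. destruct Hcases as [E|[E|[E|[E|E]]]]; rewrite E in Hc |- *; lia.
Qed.

(* c^2 = 5 k^2 forces k = 0 (irrationality of sqrt 5), by infinite descent on |k|. *)
Lemma sqrt5_irrational (c k : Z) : (c * c = 5 * k * k)%Z -> k = 0%Z.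
Proof.
  assert (Hdescent : forall (N : nat) (c k : Z),
            (Z.abs k <= Z.of_nat N)%Z -> (c * c = 5 * k * k)%Z -> k = 0%Z).
  { induction N as [|N IH]; intros c' k' Hk Hc; [lia|].
    destruct (Z.eq_dec k' 0) as [|Hk0]; [assumption|exfalso].
    pose proof (five_div_of_square c' (k' * k') ltac:(lia)) as Hr.
    pose proof (Z.div_mod c' 5 ltac:(lia)) as Hd. rewrite Hr, Z.add_0_r in Hd.
    set (t := (c' / 5)%Z) in *.
    assert (Hkt : (k' * k' = 5 * t * t)%Z) by (rewrite Hd in Hc; lia).
    assert (Habs : (Z.abs t < Z.abs k')%Z).
    { apply Z.abs_lt. split; [|]; nia. }
    pose proof (IH k' t ltac:(lia) Hkt) as Ht.
    rewrite Ht in Hkt. nia. }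
  intro Hc. exact (Hdescent (Z.abs_nat k) c k ltac:(lia) Hc).
Qed.

Lemma inv_gamma_independent (p q : Z) :
  IZR p + IZR q * / gamma = 0 -> p = 0%Z /\ q = 0%Z.
Proof.
  intro H. rewrite inv_gamma_eq in H. pose proof sqrt5_sq.
  assert (Hq : q = 0%Z).
  { apply (sqrt5_irrational (q - 2 * p)). apply eq_IZR.
    rewrite !mult_IZR, minus_IZR, mult_IZR.
    assert (E : IZR q * sqrt 5 = IZR q - 2 * IZR p) by lra.
    replace (IZR 5 * IZR q * IZR q) with ((IZR q * sqrt 5) * (IZR q * sqrt 5)) by
      (replace (IZR 5) with 5 by reflexivity; nra).
    rewrite E. ring. }
  subst q. split; [|reflexivity]. apply eq_IZR. lra.
Qed.

(* The coordinates a_k, b_k of gamma^{-k} in the basis (1, gamma^{-1}). *)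

Definition parity_sign (k : nat) : Z := if Nat.even k then 1%Z else (-1)%Z.
Definition coord_one (k : nat) : Z := (parity_sign k * f (Z.of_nat k - 2))%Z.
Definition coord_inv (k : nat) : Z := (- parity_sign k * f (Z.of_nat k - 1))%Z.

Lemma parity_sign_S (k : nat) : parity_sign (S k) = (- parity_sign k)%Z.
Proof.
  unfold parity_sign. rewrite Nat.even_succ, <- Nat.negb_even.
  destruct (Nat.even k); reflexivity.
Qed.

Lemma coord_one_rec (k : nat) : coord_one (S (S k)) = (coord_one k - coord_one (S k))%Z.
Proof.
  unfold coord_one. rewrite !parity_sign_S.
  replace (Z.of_nat (S (S k)) - 2)%Z with ((Z.of_nat k - 2) + 2)%Z by lia.
  replace (Z.of_nat (S k) - 2)%Z with ((Z.of_nat k - 2) + 1)%Z by lia.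
  rewrite f_rec_ge by lia. lia.
Qed.

Lemma coord_inv_rec (k : nat) : coord_inv (S (S k)) = (coord_inv k - coord_inv (S k))%Z.
Proof.
  unfold coord_inv. rewrite !parity_sign_S.
  replace (Z.of_nat (S (S k)) - 1)%Z with ((Z.of_nat k - 1) + 2)%Z by lia.
  replace (Z.of_nat (S k) - 1)%Z with ((Z.of_nat k - 1) + 1)%Z by lia.
  rewrite f_rec_ge by lia. lia.
Qed.

Lemma inv_gamma_pow (k : nat) : / gamma ^ k = IZR (coord_one k) + IZR (coord_inv k) * / gamma.
Proof.
  pose proof gamma_pos as Hgamma.
  assert (Hpair : forall j, / gamma ^ j = IZR (coord_one j) + IZR (coord_inv j) * / gamma /\
                        / gamma ^ S j = IZR (coord_one (S j)) + IZR (coord_inv (S j)) * / gamma).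
  { induction j as [|j [IH1 IH2]].
    - unfold coord_one, coord_inv. simpl. split; field; lra.
    - split; [exact IH2|]. rewrite coord_one_rec, coord_inv_rec, !minus_IZR.
      assert (Hpow_rec : / gamma ^ S (S j) = / gamma ^ j - / gamma ^ S j).
      { replace (/ gamma ^ S (S j)) with (/ gamma ^ j * (/ gamma * / gamma))
          by (simpl; rewrite !Rinv_mult; ring).
        rewrite inv_gamma_sq. simpl. rewrite Rinv_mult. ring. }
      rewrite Hpow_rec, IH1, IH2. ring. }
  apply (Hpair k).
Qed.

Lemma coord_one_even (k : nat) : Nat.even k = true -> (0 < coord_one k)%Z.
Proof.
  intro E. unfold coord_one, parity_sign. rewrite E.
  destruct k as [|[|k]]; [reflexivity|discriminate|].
  pose proof (f_pos (Z.of_nat (S (S k)) - 2) ltac:(lia)). lia.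
Qed.

Lemma coord_one_odd (k : nat) :
  Nat.even k = false -> (coord_one k <= 0)%Z /\ ((1 < k)%nat -> (coord_one k < 0)%Z).
Proof.
  intro E. unfold coord_one, parity_sign. rewrite E.
  pose proof (f_nonneg (Z.of_nat k - 2) ltac:(lia)). split; [lia|].
  intro Hk. pose proof (f_pos (Z.of_nat k - 2) ltac:(lia)). lia.
Qed.

Lemma coord_inv_odd (k : nat) : Nat.even k = false -> (0 < coord_inv k)%Z.
Proof.
  intro E. unfold coord_inv, parity_sign. rewrite E.
  destruct k as [|k]; [discriminate|].
  pose proof (f_pos (Z.of_nat (S k) - 1) ltac:(lia)). lia.
Qed.

Lemma coord_inv_even (k : nat) :
  Nat.even k = true -> (coord_inv k <= 0)%Z /\ ((0 < k)%nat -> (coord_inv k < 0)%Z).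
Proof.
  intro E. unfold coord_inv, parity_sign. rewrite E.
  pose proof (f_nonneg (Z.of_nat k - 1) ltac:(lia)). split; [lia|].
  intro Hk. pose proof (f_pos (Z.of_nat k - 1) ltac:(lia)). lia.
Qed.

Lemma coords_small_nonneg (k : nat) :
  (k <= 1)%nat -> (0 <= coord_one k)%Z /\ (0 <= coord_inv k)%Z.
Proof. intro Hk. destruct k as [|[|k]]; [split; discriminate..|lia]. Qed.

Definition zsum (g : nat -> Z) (l : list nat) : Z :=
  fold_right (fun i acc => (g i + acc)%Z) 0%Z l.

Lemma zsum_ext (g h : nat -> Z) (l : list nat) :
  (forall i, g i = h i) -> zsum g l = zsum h l.
Proof. intro E. induction l as [|i l IH]; simpl; [reflexivity|]. now rewrite E, IH. Qed.

Lemma zsum_add (g h : nat -> Z) (l : list nat) :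
  zsum (fun i => g i + h i)%Z l = (zsum g l + zsum h l)%Z.
Proof. induction l as [|i l IH]; simpl; lia. Qed.

Lemma zsum_triangle (g : nat -> Z) (l : list nat) :
  (Z.abs (zsum g l) <= zsum (fun i => Z.abs (g i)) l)%Z.
Proof. induction l as [|i l IH]; simpl; lia. Qed.

Lemma zsum_triangle_eq (g : nat -> Z) (l : list nat) :
  ((forall x, In x l -> 0 <= g x) \/ (forall x, In x l -> g x <= 0))%Z ->
  Z.abs (zsum g l) = zsum (fun i => Z.abs (g i)) l.
Proof.
  intro Hsign.
  assert (Hcases : zsum (fun i => Z.abs (g i)) l = zsum g l /\ (0 <= zsum g l)%Z \/
                   zsum (fun i => Z.abs (g i)) l = (- zsum g l)%Z /\ (zsum g l <= 0)%Z);
    [|lia].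
  destruct Hsign as [Hs|Hs]; [left|right]; induction l as [|i l IH]; simpl; try lia;
    pose proof (Hs i (or_introl eq_refl));
    destruct IH as [IH1 IH2]; try (intros; apply Hs; simpl; auto); lia.
Qed.

Lemma zsum_triangle_remove (g : nat -> Z) (l : list nat) (y : nat) : In y l ->
  (Z.abs (zsum g l - g y) <= zsum (fun i => Z.abs (g i)) l - Z.abs (g y))%Z.
Proof.
  induction l as [|z l IH]; simpl; [tauto|]. intros [->|Hy].
  - pose proof (zsum_triangle g l). lia.
  - specialize (IH Hy). lia.
Qed.

Lemma zsum_triangle_lt (g : nat -> Z) (l : list nat) (x y : nat) :
  In x l -> In y l -> (0 < g x)%Z -> (g y < 0)%Z ->
  (Z.abs (zsum g l) < zsum (fun i => Z.abs (g i)) l)%Z.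
Proof.
  intros Hx Hy Hgx Hgy.
  pose proof (zsum_triangle_remove g l x Hx). pose proof (zsum_triangle_remove g l y Hy). lia.
Qed.

Lemma rep_d1_eq (l : list nat) : rep_d1 l = zsum (fun i => Z.abs (coord_one i)) l.
Proof.
  apply zsum_ext. intro i. unfold coord_one, parity_sign.
  pose proof (f_nonneg (Z.of_nat i - 2) ltac:(lia)). destruct (Nat.even i); lia.
Qed.

Lemma rep_d2_eq (l : list nat) : rep_d2 l = zsum (fun i => Z.abs (coord_inv i)) l.
Proof.
  apply zsum_ext. intro i. unfold coord_inv, parity_sign.
  pose proof (f_nonneg (Z.of_nat i - 1) ltac:(lia)). destruct (Nat.even i); lia.
Qed.

Lemma rep_d_split (l : list nat) : rep_d l = (rep_d1 l + rep_d2 l)%Z.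
Proof.
  change (zsum (fun i => f (Z.of_nat i)) l =
          zsum (fun i => f (Z.of_nat i - 2)) l + zsum (fun i => f (Z.of_nat i - 1)) l)%Z.
  rewrite <- zsum_add. apply zsum_ext. intro i.
  replace (Z.of_nat i) with ((Z.of_nat i - 2) + 2)%Z at 1 by lia.
  rewrite f_rec_ge by lia.
  replace (Z.of_nat i - 2 + 1)%Z with (Z.of_nat i - 1)%Z by lia. lia.
Qed.

Lemma rep_value_coords (l : list nat) :
  rep_value l = IZR (zsum coord_one l) + IZR (zsum coord_inv l) * / gamma.
Proof.
  induction l as [|i l IH]; simpl; [ring|].
  rewrite IH, inv_gamma_pow, !plus_IZR. ring.
Qed.

Lemma representation_coords (m n : Z) (l : list nat) :
  rep_value l = IZR m + IZR n * / gamma -> m = zsum coord_one l /\ n = zsum coord_inv l.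
Proof.
  intro Hval. rewrite rep_value_coords in Hval.
  destruct (inv_gamma_independent (zsum coord_one l - m) (zsum coord_inv l - n)).
  - rewrite !minus_IZR. lra.
  - lia.
Qed.

Lemma last_In (l : list nat) (d : nat) : l <> nil -> In (last l d) l.
Proof.
  intro Hl. rewrite (app_removelast_last d Hl) at 2.
  apply in_or_app. right. now left.
Qed.

Lemma sorted_le_last (l : list nat) (x : nat) : Sorted le l -> In x l -> (x <= last l 0)%nat.
Proof.
  revert x. induction l as [|a l IH]; intros x Hs Hx; [destruct Hx|].
  destruct l as [|b l]; [destruct Hx as [->|[]]; simpl; lia|].
  inversion Hs as [|? ? Hs' Hab]; subst. inversion Hab; subst.
  change (last (a :: b :: l) 0%nat) with (last (b :: l) 0%nat).
  destruct Hx as [->|Hx]; [|now apply IH].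
  specialize (IH b Hs' (or_introl eq_refl)). lia.
Qed.

Lemma other_parity_exists (l : list nat) (k : nat) :
  ~ (forall a b, In a l -> In b l -> Nat.even a = Nat.even b) ->
  exists c, In c l /\ Nat.even c <> Nat.even k.
Proof.
  intro Hmix. apply NNPP. intro Hnone. apply Hmix. intros a b Ha Hb.
  assert (Hpar : forall c, In c l -> Nat.even c = Nat.even k).
  { intros c Hc. apply NNPP. intro Hne. apply Hnone. now exists c. }
  now rewrite (Hpar a Ha), (Hpar b Hb).
Qed.

Lemma coords_no_cancellation (l : list nat) :
  Sorted le l ->
  ((last l 0 <= 1)%nat \/ (forall a b, In a l -> In b l -> Nat.even a = Nat.even b)) ->
  Z.abs (zsum coord_one l) = zsum (fun i => Z.abs (coord_one i)) l /\
  Z.abs (zsum coord_inv l) = zsum (fun i => Z.abs (coord_inv i)) l.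
Proof.
  intros Hsort [Hsmall|Hsame].
  - assert (Hle : forall x, In x l -> (x <= 1)%nat)
      by (intros x Hx; pose proof (sorted_le_last l x Hsort Hx); lia).
    split; apply zsum_triangle_eq; left; intros x Hx;
      apply (coords_small_nonneg x (Hle x Hx)).
  - destruct l as [|x0 l0]; [split; reflexivity|].
    assert (Hpar : forall x, In x (x0 :: l0) -> Nat.even x = Nat.even x0)
      by (intros x Hx; apply Hsame; simpl; auto).
    destruct (Nat.even x0) eqn:E0; split; apply zsum_triangle_eq;
      [left|right|right|left]; intros x Hx; specialize (Hpar x Hx).
    + pose proof (coord_one_even x Hpar). lia.
    + apply (coord_inv_even x Hpar).
    + apply (coord_one_odd x Hpar).
    + pose proof (coord_inv_odd x Hpar). lia.
Qed.

Lemma coord_inv_cancellation (l : list nat) (a b : nat) :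
  In a l -> In b l -> (0 < a)%nat -> (0 < b)%nat -> Nat.even a <> Nat.even b ->
  (Z.abs (zsum coord_inv l) < zsum (fun i => Z.abs (coord_inv i)) l)%Z.
Proof.
  intros Ha Hb Ha0 Hb0 Hab.
  destruct (Nat.even a) eqn:Ea.
  - apply (zsum_triangle_lt _ l b a Hb Ha).
    + apply coord_inv_odd. destruct (Nat.even b); congruence.
    + now apply (coord_inv_even a Ea).
  - apply (zsum_triangle_lt _ l a b Ha Hb).
    + now apply coord_inv_odd.
    + apply (coord_inv_even b); [destruct (Nat.even b); congruence|exact Hb0].
Qed.

(* An index of the other parity than the largest one k is
   either positive (b-coordinates cancel) or 0, in which case k is odd and
   a_0 = 1 > 0 > a_k. *)
Lemma coords_cancellation (l : list nat) :
  ~ ((last l 0 <= 1)%nat \/ (forall a b, In a l -> In b l -> Nat.even a = Nat.even b)) ->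
  (Z.abs (zsum coord_one l) < zsum (fun i => Z.abs (coord_one i)) l \/
   Z.abs (zsum coord_inv l) < zsum (fun i => Z.abs (coord_inv i)) l)%Z.
Proof.
  intro Hc. apply not_or_and in Hc. destruct Hc as [Hbig Hmix].
  assert (Hk : In (last l 0%nat) l) by (apply last_In; intros ->; simpl in Hbig; lia).
  set (k := last l 0%nat) in *.
  destruct (other_parity_exists l k Hmix) as [c [Hc Hck]].
  destruct c as [|c].
  - left. apply (zsum_triangle_lt _ l 0%nat k Hc Hk); [reflexivity|].
    apply coord_one_odd; [destruct (Nat.even k); simpl in Hck; congruence|lia].
  - right. apply (coord_inv_cancellation l (S c) k); auto; lia.
Qed.

Theorem mainTheorem13 (m n : Z) (l : list nat) :
  IZR m + IZR n * / gamma > 0 ->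
  is_representation (IZR m + IZR n * / gamma) l ->
  (rep_d l >= Z.abs m + Z.abs n)%Z /\ (rep_d1 l >= Z.abs m)%Z /\ (rep_d2 l >= Z.abs n)%Z /\
  ((((List.last l 0%nat) <= 1)%nat \/
     (forall a b, In a l -> In b l -> Nat.even a = Nat.even b)) ->
     rep_d l = (Z.abs m + Z.abs n)%Z /\ (rep_d1 l, rep_d2 l) = (Z.abs m, Z.abs n)) /\
  (~ (((List.last l 0%nat) <= 1)%nat \/
     (forall a b, In a l -> In b l -> Nat.even a = Nat.even b)) ->
     (rep_d l > Z.abs m + Z.abs n)%Z /\ (rep_d1 l, rep_d2 l) <> (Z.abs m, Z.abs n)) /\
  ((exists a b, In a l /\ In b l /\ (0 < a)%nat /\ (0 < b)%nat /\
      Nat.even a <> Nat.even b) ->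
     (rep_d2 l > Z.abs n)%Z).
Proof.
  intros _ [Hsort Hval].
  destruct (representation_coords m n l Hval) as [-> ->].
  rewrite rep_d_split, rep_d1_eq, rep_d2_eq.
  pose proof (zsum_triangle coord_one l). pose proof (zsum_triangle coord_inv l).
  split; [lia|]. split; [lia|]. split; [lia|]. split; [|split].
  - intro Hc. destruct (coords_no_cancellation l Hsort Hc) as [-> ->]. now split.
  - intro Hc. pose proof (coords_cancellation l Hc).
    split; [lia|]. intro E. injection E. lia.
  - intros (a & b & Ha & Hb & Ha0 & Hb0 & Hab).
    pose proof (coord_inv_cancellation l a b Ha Hb Ha0 Hb0 Hab). lia.
Qed.
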